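(* Let $(X\cup Y,\mathbf{d})$ be a finite metric space with opening costs $\mathrm{open}(f)>0$ for $f\in Y$, let $\epsilon \in (0,\frac 12 )$ and let $S\subseteq Y$ be a $c$-approximation to the facility location problem on this instance. For each $x\in X$ let $N_x$ be an $\epsilon \cdot \mathbf{d}(x, S)$-net of $B_Y(\pi_S(x), \mathbf{d}(x,S)/\epsilon)$ and define $\widehat{\mathbf{d}}_S(x,y) = \min_{u\in N_x} \mathbf{d}(x,u) + \mathbf{d}(u,y)$ for $y\in Y$. Then for any set $F\subseteq Y$, \[ \widehat{\mathbf{d}}_S(X,F) + \sum_{f\in F} \mathrm{open}(f) \le (1+6c \epsilon) \cdot \mathrm{fl}(X,F), \] where $\widehat{\mathbf{d}}_S(X,F)=\sum_{x\in X}\min_{y\in F}\widehat{\mathbf{d}}_S(x,y)$ and $\mathrm{fl}(X,F)=\sum_{x\in X}\mathbf{d}(x,F)+\sum_{f\in F}\mathrm{open}(f)$.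
   Context: Facility location: find $F\subseteq Y$ minimizing $\mathrm{fl}(X,F)$; $S$ is a $c$-approximation if $\mathrm{fl}(X,S)\le c\cdot\min_{F\subseteq Y}\mathrm{fl}(X,F)$. $B_Y(x,r)=\{y\in Y:\mathbf{d}(x,y)\le r\}$; $\pi_S(x)$ is a point of $S$ closest to $x$, $\mathbf{d}(x,S)=\mathbf{d}(x,\pi_S(x))$, $\mathbf{d}(x,F)=\min_{f\in F}\mathbf{d}(x,f)$. A $\rho$-net of $B$ is a subset $N\subseteq B$ whose distinct points are pairwise at distance $\ge\rho$ and such that every point of $B$ is within distance $\rho$ of some point of $N$. *)

From HB Require Import structures.
From mathcomp Require Import all_boot all_order all_algebra.
Set Implicit Arguments. Unset Strict Implicit. Unset Printing Implicit Defensive.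
Import Order.TTheory GRing.Theory Num.Theory.
Local Open Scope ring_scope.

Section FL.
Variables (R : realFieldType) (T : finType).

(* Minimum of f over a finite set A (A nonempty); 0 if A is empty
   (the empty case is never used by the statement). *)
Definition setmin (A : {set T}) (f : T -> R) : R :=
  if [pick u in A] is Some u0 then \big[Num.min/f u0]_(u in A) f u else 0.

Definition is_metric_on (P : {set T}) (d : T -> T -> R) : Prop :=
  [/\ {in P &, forall x y, 0 <= d x y},
      {in P &, forall x y, d x y = 0 <-> x = y},
      {in P &, forall x y, d x y = d y x} &
      {in P & &, forall x y z, d x z <= d x y + d y z}].

Definition dist_set (d : T -> T -> R) (x : T) (F : {set T}) : R := setmin F (d x).

Definition fl (d : T -> T -> R) (op : T -> R) (X F : {set T}) : R :=
  \sum_(x in X) dist_set d x F + \sum_(f in F) op f.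

Definition ballY (d : T -> T -> R) (Y : {set T}) (z : T) (r : R) : {set T} :=
  [set y in Y | d z y <= r].

Definition is_net (d : T -> T -> R) (rho : R) (B N : {set T}) : Prop :=
  [/\ N \subset B,
      {in N &, forall u v, u != v -> rho <= d u v} &
      {in B, forall b, exists2 u, u \in N & d b u <= rho}].

(* S is a c-approximation: S ⊆ Y and fl(X,S) <= c * fl(X,F) for every
   (nonempty) F ⊆ Y, i.e. fl(X,S) <= c * min_F fl(X,F). *)
Definition c_approx (d : T -> T -> R) (op : T -> R) (X Y S : {set T}) (c : R) : Prop :=
  [/\ S \subset Y, S != set0 &
      forall F : {set T}, F \subset Y -> F != set0 -> fl d op X S <= c * fl d op X F].

Definition dhat (d : T -> T -> R) (N : T -> {set T}) (x y : T) : R :=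
  setmin (N x) (fun u => d x u + d u y).

Definition dhat_set (d : T -> T -> R) (N : T -> {set T}) (X F : {set T}) : R :=
  \sum_(x in X) setmin F (dhat d N x).

End FL.

From HB Require Import structures.
From mathcomp Require Import all_boot all_order all_algebra.
From mathcomp Require Import lra.
Import Order.TTheory GRing.Theory Num.Theory.
Local Open Scope ring_scope.

(* Fix x, let D = d(x,S), p = pi_S(x), and let f in F realize d(x,F).  If f
   lies in the ball B_Y(p, D/eps), a net point within eps*D of f is a detour of
   cost at most 2*eps*D.  Otherwise d(p,f) > D/eps, so D < eps*(D + d(x,F)),
   i.e. D = O(eps * d(x,F)); routing through a net point within eps*D of p then
   costs O(D).  Either way min_F dhat(x,.) <= d(x,F) + 3*eps*(D + d(x,F)), and
   summing over X, with d(X,S) <= fl(X,S) <= c * fl(X,F) and c >= 1, gives the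
   bound. *)

Section Setmin.
Context {R : realFieldType} {T : finType}.

Lemma setmin_le {A : {set T}} (f : T -> R) {a} : a \in A -> setmin A f <= f a.
Proof.
rewrite /setmin => aA; case: pickP => [u0 _|A0]; last by rewrite A0 in aA.
exact: bigmin_le_cond.
Qed.

Lemma setmin_attained {A : {set T}} (f : T -> R) {a} :
  a \in A -> exists2 b, b \in A & setmin A f = f b.
Proof.
rewrite /setmin => aA; case: pickP => [u0 u0A|A0]; last by rewrite A0 in aA.
apply: (big_ind (fun v => exists2 b, b \in A & v = f b)) => //.
- by exists u0.
- move=> _ _ [b1 b1A ->] [b2 b2A ->].
  by case: (leP (f b1) (f b2)) => _; [exists b1 | exists b2].
- by move=> b bA; exists b.
Qed.

End Setmin.

Section MetricSpace.
Context {R : realFieldType} {T : finType} {P : {set T}} {d : T -> T -> R}.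
Hypothesis dP : is_metric_on P d.

Let d_ge0 {x y} : x \in P -> y \in P -> 0 <= d x y.
Proof. by case: dP => + _ _ _; apply. Qed.
Let d_id {x y} : x \in P -> y \in P -> d x y = 0 <-> x = y.
Proof. by case: dP => _ + _ _; apply. Qed.
Let dC {x y} : x \in P -> y \in P -> d x y = d y x.
Proof. by case: dP => _ _ + _; apply. Qed.
Let d_triangle {x y z} : x \in P -> y \in P -> z \in P -> d x z <= d x y + d y z.
Proof. by case: dP => _ _ _; apply. Qed.

Lemma dist_set_ge0 x (F : {set T}) :
  x \in P -> F \subset P -> F != set0 -> 0 <= dist_set d x F.
Proof.
rewrite /dist_set => xP FP /set0Pn[f0 f0F].
have [f fF ->] := setmin_attained (d x) f0F.
exact: d_ge0 (subsetP FP f fF).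
Qed.

Lemma sum_dist_set_ge0 (X F : {set T}) :
  X \subset P -> F \subset P -> F != set0 -> 0 <= \sum_(x in X) dist_set d x F.
Proof.
move=> XP FP F0; apply: sumr_ge0 => x xX.
exact: dist_set_ge0 (subsetP XP x xX) FP F0.
Qed.

Lemma fl_gt0 {op : T -> R} {X F : {set T}} :
  X \subset P -> F \subset P -> F != set0 -> {in F, forall f, 0 < op f} ->
  0 < fl d op X F.
Proof.
move=> XP FP F0 op_gt0; have [f fF] := set0Pn _ F0.
apply: ltr_wpDl; first exact: sum_dist_set_ge0.
rewrite (bigD1 f) //=; apply: ltr_wpDr; last exact: op_gt0.
by apply: sumr_ge0 => g /andP[gF _]; apply/ltW/op_gt0.
Qed.

Lemma c_approx_ge1 {op : T -> R} {X Y S : {set T}} {c : R} :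
  X \subset P -> Y \subset P -> {in Y, forall f, 0 < op f} ->
  c_approx d op X Y S c -> 1 <= c.
Proof.
move=> XP YP op_gt0 [SY S0 S_opt].
have flS_gt0 : 0 < fl d op X S.
  by apply: fl_gt0 XP (subset_trans SY YP) S0 _ => // f /(subsetP SY)/op_gt0.
by have := S_opt S SY S0; nra.
Qed.

Section NetDetour.
Context {N : T -> {set T}}.

Lemma dhat_le_near {x y u} :
  u \in N x -> x \in P -> y \in P -> u \in P -> dhat d N x y <= d x y + 2 * d y u.
Proof.
move=> uN xP yP uP; apply: le_trans (setmin_le _ uN) _.
have := d_triangle xP yP uP; rewrite (dC uP yP); lra.
Qed.

Lemma dhat_triangle {x y z} :
  N x \subset P -> N x != set0 -> y \in P -> z \in P ->
  dhat d N x y <= dhat d N x z + d z y.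
Proof.
rewrite /dhat => NP /set0Pn[u0 u0N] yP zP.
have [u uN ->] := setmin_attained (fun u => d x u + d u z) u0N.
apply: le_trans (setmin_le _ uN) _.
by rewrite -addrA lerD2l; apply: d_triangle => //; apply: (subsetP NP).
Qed.

Lemma subset_ballY (Y : {set T}) p r : ballY d Y p r \subset Y.
Proof. by apply/subsetP => y; rewrite inE => /andP[]. Qed.

Lemma setmin_dhat_le {Y F : {set T}} {x p} {eps : R} :
  0 < eps -> eps < 1 / 2 -> x \in P -> Y \subset P -> p \in Y ->
  F \subset Y -> F != set0 ->
  is_net d (eps * d x p) (ballY d Y p (d x p / eps)) (N x) ->
  setmin F (dhat d N x) <= dist_set d x F + 3 * eps * (d x p + dist_set d x F).
Proof.
move=> eps_gt0 eps_lt xP YP pY FY /set0Pn[f0 f0F] [NB _ N_cover].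
rewrite /dist_set; have [f fF ->] := setmin_attained (d x) f0F.
apply: le_trans (setmin_le _ fF) _.
have NP := subset_trans NB (subset_trans (subset_ballY Y p _) YP).
have [pP fP] := (subsetP YP p pY, subsetP YP f (subsetP FY f fF)).
have [xp_ge0 xf_ge0] := (d_ge0 xP pP, d_ge0 xP fP).
case: (leP (d p f) (d x p / eps)) => [f_near | f_far].
- have [u uN fu] : exists2 u, u \in N x & d f u <= eps * d x p.
    by apply: N_cover; rewrite inE (subsetP FY f fF) f_near.
  apply: le_trans (dhat_le_near uN xP fP (subsetP NP u uN)) _; nra.
- have [u uN pu] : exists2 u, u \in N x & d p u <= eps * d x p.
    apply: N_cover; rewrite inE pY (proj2 (d_id pP pP) erefl).
    by rewrite divr_ge0 // ltW.
  have N0 : N x != set0 by apply/set0Pn; exists u.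
  apply: le_trans (dhat_triangle NP N0 fP pP) _.
  have dhat_p := dhat_le_near uN xP pP (subsetP NP u uN).
  have pf_le : d p f <= d x p + d x f by rewrite (dC xP pP); apply: d_triangle.
  have xp_small : d x p < eps * (d x p + d x f).
    apply: lt_le_trans (ler_wpM2l (ltW eps_gt0) pf_le).
    by rewrite mulrC -ltr_pdivrMr.
  have : 0 <= d x p * (1 - 2 * eps) by rewrite mulr_ge0 // subr_ge0; lra.
  nra.
Qed.

End NetDetour.

End MetricSpace.

Theorem corollary3p3 (R : realFieldType) (T : finType) (X Y : {set T})
    (d : T -> T -> R) (op : T -> R) (eps c : R) (S : {set T})
    (pi : T -> T) (N : T -> {set T}) :
  is_metric_on (X :|: Y) d ->
  {in Y, forall f, 0 < op f} ->
  0 < eps -> eps < 1 / 2 ->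
  c_approx d op X Y S c ->
  {in X, forall x, pi x \in S /\ d x (pi x) = dist_set d x S} ->
  {in X, forall x, is_net d (eps * dist_set d x S)
                     (ballY d Y (pi x) (dist_set d x S / eps)) (N x)} ->
  forall F : {set T}, F \subset Y -> F != set0 ->
    dhat_set d N X F + \sum_(f in F) op f <= (1 + 6 * c * eps) * fl d op X F.
Proof.
move=> dm op_gt0 eps_gt0 eps_lt capx piP netP F FY F0.
have [XP YP] := (subsetUl X Y, subsetUr X Y).
have [SY S0 S_opt] := capx.
have dhat_le : dhat_set d N X F <= \sum_(x in X) dist_set d x F
    + 3 * eps * (\sum_(x in X) dist_set d x S + \sum_(x in X) dist_set d x F).
  rewrite -big_split mulr_sumr -big_split /=; apply: ler_sum => x xX.
  have [piS piD] := piP x xX; have := netP x xX; rewrite -piD => net.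
  exact: (setmin_dhat_le (N := N) dm eps_gt0 eps_lt (subsetP XP x xX) YP
           (subsetP SY _ piS) FY F0 net).
have c_ge1 := c_approx_ge1 dm XP YP op_gt0 capx.
have flF_gt0 := fl_gt0 dm XP (subset_trans FY YP) F0
  (fun f fF => op_gt0 f (subsetP FY f fF)).
have flS_le := S_opt F FY F0.
have opS_ge0 : 0 <= \sum_(f in S) op f.
  by apply: sumr_ge0 => f /(subsetP SY)/op_gt0/ltW.
have opF_ge0 : 0 <= \sum_(f in F) op f.
  by apply: sumr_ge0 => f /(subsetP FY)/op_gt0/ltW.
move: dhat_le flS_le flF_gt0 opF_ge0; rewrite /fl.
set A := \sum_(x in X) _ x F; set B := \sum_(x in X) _ x S; set O := \sum_(f in F) _.
clearbody A B O => dhat_le flS_le flF_gt0 O_ge0.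
have c_flF : 0 <= (c - 1) * (A + O) by rewrite mulr_ge0 ?subr_ge0 // ltW.
have cost_le : B + A <= 2 * c * (A + O) by lra.
have := ler_wpM2l (ltW eps_gt0) cost_le; lra.
Qed.
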